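(* For every partition $\mu$ of $n$, the $\mathbb{Q}$-linear extension $\Phi: M^\mu\to \operatorname{span}_{\mathbb{Q}}\mathcal{A}(\mu)$ is an isomorphism of graded vector spaces; equivalently, $\Phi$ restricts to a degree-preserving bijection from the set of row-strict fillings of $\mu$ onto $\mathcal{A}(\mu)$.
   Context: A row-strict filling of a partition $\mu$ of $n$ (Young diagram, left-justified rows, rows top to bottom) places $1,\dots,n$ bijectively in its boxes, increasing left to right along rows. Dimension pairs (with $h(j)=j$): $(a,b)$ is a dimension pair of $T$ if $b>a$; $b$ lies in the same column as $a$ strictly below it or in a column strictly left of $a$'s; and if the box immediately right of $a$ exists and contains $c$, then $b\le c$. $D^T_j$ is the set of dimension pairs $(a,j)$; $\Phi(T)=\prod_{j=2}^n x_j^{|D^T_j|}$; $\mathcal{A}(\mu)$ is the set of all $\Phi(T)$. $M^\mu$ is the formal $\mathbb{Q}$-span of the row-strict fillings of $\mu$, graded by number of dimension pairs; $\operatorname{span}\mathcal{A}(\mu)$ is graded by polynomial degree. *)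

From mathcomp Require Import all_boot.
Set Implicit Arguments. Unset Strict Implicit. Unset Printing Implicit Defensive.

Definition is_partition (n : nat) (mu : seq nat) : bool :=
  [&& sorted geq mu, all (fun k => 0 < k) mu & sumn mu == n].

(* A filling of a Young diagram is a list of rows (top to bottom), each row a
   list of entries read left to right; row r, column c holds [entry T r c]. *)
Definition entry (T : seq (seq nat)) (r c : nat) : nat := nth 0 (nth [::] T r) c.

Definition is_box (T : seq (seq nat)) (r c : nat) : bool :=
  (r < size T) && (c < size (nth [::] T r)).

Definition boxes (T : seq (seq nat)) : seq (nat * nat) :=
  flatten [seq [seq (r, c) | c <- iota 0 (size (nth [::] T r))] | r <- iota 0 (size T)].

Definition row_strict (n : nat) (mu : seq nat) (T : seq (seq nat)) : bool :=
  [&& shape T == mu, perm_eq (flatten T) (iota 1 n) & all (sorted ltn) T].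

Definition dim_pair_at (T : seq (seq nat)) (ra ca rb cb : nat) : bool :=
  [&& entry T ra ca < entry T rb cb,
      ((cb == ca) && (ra < rb)) || (cb < ca)
    & is_box T ra ca.+1 ==> (entry T rb cb <= entry T ra ca.+1)].

Definition dim_pair (T : seq (seq nat)) (a b : nat) : bool :=
  has (fun p => has (fun q =>
         [&& entry T p.1 p.2 == a, entry T q.1 q.2 == b
           & dim_pair_at T p.1 p.2 q.1 q.2]) (boxes T)) (boxes T).

Definition D_card (n : nat) (T : seq (seq nat)) (j : nat) : nat :=
  count (fun a => dim_pair T a j) (iota 1 n).

(* Phi(T) = prod_{j=2}^n x_j^{|D^T_j|}, represented by its exponent vector
   [:: |D_2|; ...; |D_n|] (monomials in x_2..x_n are equal iff their exponent
   vectors are equal). *)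
Definition Phi (n : nat) (T : seq (seq nat)) : seq nat :=
  [seq D_card n T j | j <- iota 2 n.-1].

Definition mono_deg (m : seq nat) : nat := sumn m.

(* Total number of dimension pairs of T (the grading on M^mu). *)
Definition num_dim_pairs (n : nat) (T : seq (seq nat)) : nat :=
  \sum_(a <- iota 1 n) \sum_(b <- iota 1 n) dim_pair T a b.

Definition in_A (n : nat) (mu : seq nat) (m : seq nat) : Prop :=
  exists T, row_strict n mu T /\ Phi n T = m.

From mathcomp Require Import all_boot.
Set Implicit Arguments. Unset Strict Implicit. Unset Printing Implicit Defensive.

(* Let j lie in row r_j of T and let l_j(r) be the number of entries <= j in
   row r.  An entry a of row r can form a dimension pair (a, j) only if it is
   the last entry of its row below j (the box to its right must hold a value
   >= j), and then it does exactly when l_j(r) > l_j(r_j), or l_j(r) = l_j(r_j)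
   and r < r_j.  So |D_j| is the rank of r_j among the rows ordered by
   decreasing l_j, ties broken by index: l_j and |D_j| determine r_j, hence
   l_(j-1).  Descending from l_n = mu, Phi(T) thus determines every l_j, and
   the l_j determine T.  Degree preservation is the count of dimension pairs
   grouped by their larger entry, using |D_1| = 0. *)

Lemma count_leq_ltn_mem (j : nat) (w : seq nat) :
  count (fun x => x <= j) w = count (fun x => x < j) w + count_mem j w.
Proof.
elim: w => //= x w ->; rewrite addnACA; congr (_ + _).
by case: ltngtP.
Qed.

Lemma count_ltn_leq_pred (j : nat) (w : seq nat) : 0 < j ->
  count (fun x => x < j) w = count (fun x => x <= j.-1) w.
Proof. by case: j. Qed.

Lemma sorted_nth_ltn_count (j : nat) (w : seq nat) : sorted ltn w ->
  forall c, c < size w -> (nth 0 w c < j) = (c < count (fun x => x < j) w).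
Proof.
elim: w => //= x w IH w_sorted c.
have x_min : all (fun y => x < y) w by exact: order_path_min ltn_trans w_sorted.
have count0 : ~~ (x < j) -> count (fun y => y < j) w = 0.
  rewrite -leqNgt => jx; apply/eqP; rewrite -leqn0 leqNgt -has_count.
  by apply/hasP=> -[y /(allP x_min) xy]; rewrite ltnNge (leq_trans jx (ltnW xy)).
case: c => [|c] /= c_lt; case: (ltnP x j) => xj /=.
- by [].
- by rewrite count0 // -leqNgt.
- by rewrite IH ?(path_sorted w_sorted).
- rewrite count0 -?leqNgt // ltnNge; apply/negbTE/negPn.
  exact: leq_trans xj (ltnW (allP x_min _ (mem_nth 0 c_lt))).
Qed.

Lemma index_sorted_count (j : nat) (w : seq nat) : sorted ltn w -> j \in w ->
  index j w = count (fun x => x < j) w.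
Proof.
move=> w_sorted jw.
have idx_lt : index j w < size w by rewrite index_mem.
have := sorted_nth_ltn_count j w_sorted idx_lt; rewrite nth_index // ltnn.
move/esym/negbT; rewrite -leqNgt => cnt_le; apply/eqP; rewrite eqn_leq cnt_le andbT.
rewrite leqNgt; apply/negP => lt_idx.
have cnt_lt : count (fun x => x < j) w < size w by exact: ltn_trans lt_idx idx_lt.
have := sorted_ltn_nth ltn_trans 0 w_sorted _ _ cnt_lt idx_lt lt_idx.
by rewrite nth_index // sorted_nth_ltn_count // ltnn.
Qed.

Lemma last_index_below c m s : c < s -> m <= s ->
  (c < m) && ((c.+1 < s) ==> ~~ (c.+1 < m)) = (c.+1 == m).
Proof.
move=> c_lt m_le; case: (ltnP c m) => [c_lt_m|m_le_c]; last by rewrite gtn_eqF.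
case: (eqVneq c.+1 m) => [<-|neq]; first by rewrite ltnn implybT.
have cS_lt : c.+1 < m by rewrite ltn_neqAle neq c_lt_m.
by rewrite cS_lt (leq_trans cS_lt m_le).
Qed.

Lemma uniq_flatten_row_eq (A : eqType) (s : seq (seq A)) r r' x :
  uniq (flatten s) -> r < size s -> r' < size s ->
  x \in nth [::] s r -> x \in nth [::] s r' -> r = r'.
Proof.
move=> s_uniq; wlog lt_rr' : r r' / r < r'.
  move=> W r_lt r'_lt xr xr'.
  by case: (ltngtP r r') => // lt; [exact: W | exact/esym/(W r' r)].
move=> _ r'_lt xr xr'; exfalso.
move: s_uniq; rewrite -(cat_take_drop r' s) flatten_cat cat_uniq.
case/and3P=> _ /hasP not_shared _; apply: not_shared; exists x.
  apply/flattenP; exists (nth [::] (drop r' s) 0); last by rewrite nth_drop addn0.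
  by apply: mem_nth; rewrite size_drop subn_gt0.
apply/flattenP; exists (nth [::] (take r' s) r); last by rewrite nth_take.
by apply: mem_nth; rewrite size_takel // ltnW.
Qed.

Definition rank (lt : rel nat) (N s : nat) : nat := count (lt^~ s) (iota 0 N).

Section Rank.

Variable lt : rel nat.
Hypothesis lt_trans : transitive lt.
Hypothesis lt_irr : irreflexive lt.
Hypothesis lt_total : forall r s, r != s -> lt r s || lt s r.

Lemma rank_lt N r s : r < N -> lt r s -> rank lt N r < rank lt N s.
Proof.
move=> r_lt lt_rs; have le_rs : subpred (lt^~ r) (lt^~ s) by move=> x /lt_trans; apply.
rewrite /rank -(cat_take_drop r (iota 0 N)) !count_cat (drop_nth 0) ?size_iota //=.
rewrite nth_iota // add0n lt_irr lt_rs add0n add1n addnS ltnS.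
by rewrite leq_add // sub_count.
Qed.

Lemma rank_inj N r s : r < N -> s < N -> rank lt N r = rank lt N s -> r = s.
Proof.
move=> r_lt s_lt eq_rank; case: (eqVneq r s) => // /lt_total /orP[] lt_rs.
  by have := rank_lt r_lt lt_rs; rewrite eq_rank ltnn.
by have := rank_lt s_lt lt_rs; rewrite eq_rank ltnn.
Qed.

End Rank.

Definition row_lt (l : seq nat) : rel nat := fun r s =>
  (nth 0 l s < nth 0 l r) || ((nth 0 l r == nth 0 l s) && (r < s)).

Lemma row_lt_trans l : transitive (row_lt l).
Proof.
move=> s r t; rewrite /row_lt.
case/orP=> [lt1|/andP[/eqP-> lt1]]; case/orP=> [lt2|/andP[/eqP<- lt2]].
- by rewrite (ltn_trans lt2 lt1).
- by rewrite lt1.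
- by rewrite lt2.
- by rewrite eqxx (ltn_trans lt1 lt2) orbT.
Qed.

Lemma row_lt_irr l : irreflexive (row_lt l).
Proof. by move=> r; rewrite /row_lt !ltnn andbF. Qed.

Lemma row_lt_total l r s : r != s -> row_lt l r s || row_lt l s r.
Proof.
rewrite /row_lt => neq_rs; case: (ltngtP (nth 0 l r) (nth 0 l s)) => //= _.
by case: ltngtP neq_rs => // ->; rewrite eqxx.
Qed.

Definition row_of (T : seq (seq nat)) (j : nat) : nat := find (fun w => j \in w) T.

Definition row_counts (j : nat) (T : seq (seq nat)) : seq nat :=
  [seq count (fun x => x <= j) w | w <- T].

Lemma mem_row_counts (T : seq (seq nat)) r x : r < size T -> 0 < x ->
  (x \in nth [::] T r) = (nth 0 (row_counts x.-1 T) r < nth 0 (row_counts x T) r).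
Proof.
move=> r_lt x_gt0; rewrite !(nth_map [::]) // (count_leq_ltn_mem x).
by rewrite (count_ltn_leq_pred _ x_gt0) -{1}[count _ _]addn0 ltn_add2l -has_pred1 has_count.
Qed.

Lemma mem_boxes (T : seq (seq nat)) r c : ((r, c) \in boxes T) = is_box T r c.
Proof.
apply/flatten_mapP/andP => [[r0]|[r_lt c_lt]].
  by rewrite mem_iota => r0_lt /mapP[c0]; rewrite mem_iota => c0_lt [-> ->].
by exists r; rewrite ?mem_iota //; apply/mapP; exists c; rewrite ?mem_iota.
Qed.

Lemma D_card1 n (T : seq (seq nat)) : D_card n T 1 = 0.
Proof.
apply/eqP; rewrite -leqn0 leqNgt -has_count; apply/hasP=> -[a].
rewrite mem_iota => /andP[a_gt0 _] /hasP[p _ /hasP[q _ /and3P[/eqP ea /eqP e1]]].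
by rewrite /dim_pair_at ea e1 ltnNge a_gt0.
Qed.

Lemma mono_deg_Phi n (T : seq (seq nat)) : mono_deg (Phi n T) = num_dim_pairs n T.
Proof.
rewrite /mono_deg /Phi /num_dim_pairs exchange_big sumnE big_map /=.
have sum_dim_pairs j : \sum_(a <- iota 1 n) dim_pair T a j = D_card n T j.
  by rewrite /D_card -sumn_count sumnE big_map.
case: n sum_dim_pairs => [|n] sum_dim_pairs; first by rewrite !big_nil.
rewrite [iota 1 _]/= big_cons sum_dim_pairs D_card1 add0n.
by apply: eq_bigr => j _; rewrite sum_dim_pairs.
Qed.

Section Filling.

Variables (n : nat) (mu : seq nat) (T : seq (seq nat)).
Hypothesis T_row_strict : row_strict n mu T.

Lemma mem_filling x : (x \in flatten T) = (0 < x <= n).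
Proof.
by case/and3P: T_row_strict => _ /perm_mem-> _; rewrite mem_iota add1n ltnS.
Qed.

Lemma filling_uniq : uniq (flatten T).
Proof. by case/and3P: T_row_strict => _ /perm_uniq-> _; exact: iota_uniq. Qed.

Lemma filling_row_sorted r : sorted ltn (nth [::] T r).
Proof.
case/and3P: T_row_strict => _ _ /allP rows_sorted.
by case: (ltnP r (size T)) => [/(mem_nth [::])/rows_sorted|/(nth_default [::])->].
Qed.

Lemma filling_row_uniq r : uniq (nth [::] T r).
Proof. exact: (sorted_uniq ltn_trans ltnn (filling_row_sorted r)). Qed.

Lemma mem_filling_row r x : x \in nth [::] T r -> 0 < x <= n.
Proof.
case: (ltnP r (size T)) => [r_lt xr|/(nth_default [::])-> //].
by rewrite -mem_filling; apply/flattenP; exists (nth [::] T r); rewrite ?mem_nth.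
Qed.

Lemma filling_box_eq r c r' c' : is_box T r c -> is_box T r' c' ->
  entry T r c = entry T r' c' -> (r, c) = (r', c').
Proof.
case/andP=> r_lt c_lt /andP[r'_lt c'_lt] eq_entry.
have eq_r : r = r'.
  apply: (uniq_flatten_row_eq filling_uniq r_lt r'_lt (x := entry T r c)).
    exact: mem_nth.
  by rewrite eq_entry; exact: mem_nth.
subst r'; congr (_, _); apply/eqP.
by rewrite -(nth_uniq 0 c_lt c'_lt (filling_row_uniq r)); apply/eqP.
Qed.

Lemma dim_pair_entry r c r' c' : is_box T r c -> is_box T r' c' ->
  dim_pair T (entry T r c) (entry T r' c') = dim_pair_at T r c r' c'.
Proof.
move=> box_rc box_rc'; apply/idP/idP => [|pair_rc].
  case/hasP=> -[pr pc]; rewrite mem_boxes => box_p /hasP[[qr qc]].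
  rewrite mem_boxes => box_q /and3P[/eqP/(filling_box_eq box_p box_rc)[-> ->]].
  by move/eqP/(filling_box_eq box_q box_rc')=> [-> ->].
apply/hasP; exists (r, c); rewrite ?mem_boxes //.
by apply/hasP; exists (r', c'); rewrite ?mem_boxes //= !eqxx.
Qed.

Section Entry.

Variable j : nat.
Hypothesis j_range : 0 < j <= n.

Lemma row_of_lt : row_of T j < size T.
Proof.
rewrite /row_of -has_find; have := j_range; rewrite -mem_filling.
by case/flattenP=> w w_in jw; apply/hasP; exists w.
Qed.

Lemma mem_row_of : j \in nth [::] T (row_of T j).
Proof.
have has_j : has (fun w => j \in w) T by rewrite has_find row_of_lt.
exact: (nth_find [::] has_j).
Qed.

Lemma count_mem_row r : r < size T -> count_mem j (nth [::] T r) = (r == row_of T j).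
Proof.
move=> r_lt; case: eqVneq => [->|neq].
  by rewrite count_uniq_mem ?mem_row_of ?filling_row_uniq.
apply/count_memPn/negP => jr; move/eqP: neq; apply.
exact: uniq_flatten_row_eq filling_uniq r_lt row_of_lt jr mem_row_of.
Qed.

Lemma nth_row_counts r : r < size T ->
  nth 0 (row_counts j T) r = count (fun x => x < j) (nth [::] T r) + (r == row_of T j).
Proof. by move=> r_lt; rewrite (nth_map [::]) // count_leq_ltn_mem count_mem_row. Qed.

Lemma row_counts_pred r : r < size T ->
  nth 0 (row_counts j.-1 T) r = nth 0 (row_counts j T) r - (r == row_of T j).
Proof.
move=> r_lt; case/andP: j_range => j_gt0 _.
by rewrite nth_row_counts // addnK (nth_map [::]) // count_ltn_leq_pred.
Qed.

Lemma dim_pair_in_row r c : r < size T -> c < size (nth [::] T r) ->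
  dim_pair T (entry T r c) j =
  (c.+1 == count (fun x => x < j) (nth [::] T r)) && row_lt (row_counts j T) r (row_of T j).
Proof.
move=> r_lt c_lt; set rj := row_of T j; set m := count _ (nth [::] T r).
set cj := index j (nth [::] T rj).
have j_entry : entry T rj cj = j by rewrite /entry nth_index // mem_row_of.
have box_j : is_box T rj cj by rewrite /is_box row_of_lt index_mem mem_row_of.
have cj_count : cj = count (fun x => x < j) (nth [::] T rj).
  exact: index_sorted_count (filling_row_sorted rj) mem_row_of.
have next_ge : (is_box T r c.+1 ==> (j <= entry T r c.+1)) =
    ((c.+1 < size (nth [::] T r)) ==> ~~ (c.+1 < m)).
  rewrite /is_box r_lt /=; case: ltnP => //= cS_lt.
  by rewrite /entry leqNgt sorted_nth_ltn_count ?filling_row_sorted.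
rewrite -j_entry dim_pair_entry ?/is_box ?r_lt // /dim_pair_at j_entry next_ge.
rewrite /entry sorted_nth_ltn_count ?filling_row_sorted // andbCA andbC.
rewrite last_index_below ?count_size //; case: eqVneq => //= m_eq.
case: (eqVneq r rj) => [r_eq|neq].
  subst r; rewrite row_lt_irr ltnn andbF /=.
  by rewrite cj_count -m_eq ltnNge leqnSn.
rewrite /row_lt /= !nth_row_counts ?row_of_lt // eqxx (negbTE neq) -cj_count.
by rewrite addn0 addn1 -m_eq ltnS eqSS orbC eq_sym.
Qed.

Lemma count_dim_pair_row r : r < size T ->
  count (fun a => dim_pair T a j) (nth [::] T r) = row_lt (row_counts j T) r (row_of T j).
Proof.
move=> r_lt; set w := nth [::] T r; set m := count (fun x => x < j) w.
rewrite -[w in count _ w](mkseq_nth 0) /mkseq count_map.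
rewrite (eq_in_count (a2 := fun c => (c.+1 == m) && row_lt (row_counts j T) r (row_of T j))).
  2: by move=> c; rewrite mem_iota => /andP[_ c_lt]; exact: dim_pair_in_row.
case lt_r: (row_lt _ r _); last first.
  by rewrite (eq_count (a2 := pred0)) ?count_pred0 // => c /=; rewrite andbF.
have neq : r != row_of T j by apply: contraTneq lt_r => ->; rewrite row_lt_irr.
have m_gt0 : 0 < m.
  move: lt_r; rewrite /row_lt /= !nth_row_counts ?row_of_lt // eqxx (negbTE neq).
  by rewrite addn0 addn1 -/m => /orP[/(leq_ltn_trans (leq0n _))|/andP[/eqP->]].
rewrite (eq_count (a2 := pred1 m.-1)) => [|c /=]; last first.
  by rewrite andbT -[c == _]eqSS prednK.
by rewrite (count_uniq_mem _ (iota_uniq 0 _)) mem_iota /= -ltnS prednK // ltnS count_size.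
Qed.

Lemma D_card_rank : D_card n T j = rank (row_lt (row_counts j T)) (size T) (row_of T j).
Proof.
have [_ /permP count_perm _] := and3P T_row_strict.
rewrite /D_card -count_perm count_flatten /rank -sumn_count.
rewrite -[T in map _ T](mkseq_nth [::]) /mkseq -map_comp; congr sumn.
by apply/eq_in_map => r; rewrite mem_iota => /andP[_ r_lt]; exact: count_dim_pair_row.
Qed.

End Entry.

Lemma row_counts_top : row_counts n T = mu.
Proof.
have [/eqP <- _ _] := and3P T_row_strict.
apply/eq_in_map => w w_in; rewrite -count_predT; apply: eq_in_count => x xw /=.
have : x \in flatten T by apply/flattenP; exists w.
by rewrite mem_filling => /andP[].
Qed.

End Filling.

Lemma eq_D_card_Phi n (T1 T2 : seq (seq nat)) : Phi n T1 = Phi n T2 ->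
  forall j, 0 < j <= n -> D_card n T1 j = D_card n T2 j.
Proof.
move=> eq_Phi [|[|j]] // /andP[_ j_le]; first by rewrite !D_card1.
have j_lt : j < n.-1 by rewrite -ltnS prednK // (leq_trans _ j_le).
move/(congr1 (nth 0)): eq_Phi => /(congr1 (fun f => f j)).
by rewrite /Phi !(nth_map 0) ?size_iota ?nth_iota.
Qed.

Lemma row_strict_eq_of_row_counts n mu (T1 T2 : seq (seq nat)) :
  row_strict n mu T1 -> row_strict n mu T2 ->
  (forall j, j <= n -> row_counts j T1 = row_counts j T2) -> T1 = T2.
Proof.
move=> T1_row_strict T2_row_strict eq_counts.
have eq_size : size T1 = size T2.
  by move/(congr1 size): (eq_counts 0 (leq0n n)); rewrite !size_map.
apply: (eq_from_nth (x0 := [::])) => // r r1_lt; have r2_lt := r1_lt; rewrite eq_size in r2_lt.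
apply: (irr_sorted_eq ltn_trans ltnn (filling_row_sorted T1_row_strict r)
        (filling_row_sorted T2_row_strict r)) => x.
case: (boolP (0 < x <= n)) => [/andP[x_gt0 x_le]|x_out].
  by rewrite !mem_row_counts // !eq_counts // (leq_trans (leq_pred x)).
have notin T (T_row_strict : row_strict n mu T) : x \notin nth [::] T r.
  exact: contra (@mem_filling_row _ _ _ T_row_strict r x) x_out.
by rewrite (negbTE (notin _ T1_row_strict)) (negbTE (notin _ T2_row_strict)).
Qed.

Section TwoFillings.

Variables (n : nat) (mu : seq nat) (T1 T2 : seq (seq nat)).
Hypotheses (T1_row_strict : row_strict n mu T1) (T2_row_strict : row_strict n mu T2).
Hypothesis eq_Phi : Phi n T1 = Phi n T2.

Lemma size_fillings : size T1 = size T2.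
Proof.
have [/eqP shape1 _ _] := and3P T1_row_strict; have [/eqP shape2 _ _] := and3P T2_row_strict.
by move/(congr1 size): (etrans shape1 (esym shape2)); rewrite !size_map.
Qed.

Lemma eq_row_counts j : j <= n -> row_counts j T1 = row_counts j T2.
Proof.
move=> j_le; rewrite -(subKn j_le); elim: (n - j) (leq_subr j n) => [|k IH] k_lt.
  by rewrite subn0 (row_counts_top T1_row_strict) (row_counts_top T2_row_strict).
have i_range : 0 < n - k <= n by rewrite subn_gt0 k_lt leq_subr.
have eq_counts := IH (ltnW k_lt).
have eq_row : row_of T1 (n - k) = row_of T2 (n - k).
  apply: (rank_inj (@row_lt_trans (row_counts (n - k) T1)) (@row_lt_irr _) (@row_lt_total _)
            (row_of_lt T1_row_strict i_range)).
    by rewrite size_fillings; exact: (row_of_lt T2_row_strict i_range).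
  rewrite -(D_card_rank T1_row_strict i_range) eq_counts size_fillings.
  by rewrite -(D_card_rank T2_row_strict i_range) (eq_D_card_Phi eq_Phi).
apply: (eq_from_nth (x0 := 0)); first by rewrite !size_map size_fillings.
move=> r; rewrite size_map subnS => r_lt.
rewrite (row_counts_pred T1_row_strict i_range r_lt).
rewrite (row_counts_pred T2_row_strict i_range) -?size_fillings //.
by rewrite eq_counts eq_row.
Qed.

Lemma Phi_inj : T1 = T2.
Proof.
exact: row_strict_eq_of_row_counts T1_row_strict T2_row_strict eq_row_counts.
Qed.

End TwoFillings.

Theorem mainTheorem9 (n : nat) (mu : seq nat) (Hmu : is_partition n mu) :
  (forall T, row_strict n mu T -> in_A n mu (Phi n T)) /\
  (forall m, in_A n mu m -> exists T, row_strict n mu T /\ Phi n T = m) /\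
  (forall T1 T2, row_strict n mu T1 -> row_strict n mu T2 ->
     Phi n T1 = Phi n T2 -> T1 = T2) /\
  (forall T, row_strict n mu T -> mono_deg (Phi n T) = num_dim_pairs n T).
Proof.
split; first by move=> T T_row_strict; exists T.
split; first by move=> m [T [T_row_strict <-]]; exists T.
split; first exact: Phi_inj.
by move=> T _; exact: mono_deg_Phi.
Qed.
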